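(* Let $T\in\mathcal{L}(\mathcal{H})$ have closed range and satisfy $T^\dagger T(T+T^* )=(T+T^* )T^\dagger T$. Then $T$ is a hypo-EP operator.
   Context: $\mathcal{H}$ is a Hilbert space, $\mathcal{L}(\mathcal{H})$ the bounded operators on it. For $T$ with closed range, $T^\dagger$ is its Moore–Penrose inverse (unique solution of $TT^\dagger T=T$, $T^\dagger TT^\dagger=T^\dagger$, $(T^\dagger T)^*=T^\dagger T$, $(TT^\dagger)^*=TT^\dagger$). $T$ is hypo-EP if $T$ has closed range and $T^\dagger T-TT^\dagger\ge 0$, equivalently $R(T)\subset R(T^* )$, where $R(\cdot)$ denotes range. *)

From HB Require Import structures.
From mathcomp Require Import all_boot all_order all_algebra.
From mathcomp Require Import complex.
From mathcomp Require Import reals.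
Set Implicit Arguments. Unset Strict Implicit. Unset Printing Implicit Defensive.
Import Order.TTheory GRing.Theory Num.Theory.
Local Open Scope ring_scope.
Local Open Scope complex_scope.

(* A complex Hilbert space is modelled by a module H over C = R[i]
   (R : realType, the real numbers), with an inner product ip that is
   linear in the first argument and conjugate-symmetric, positive definite,
   and such that H is complete for the induced norm. *)
Section Hilbert.
Variables (R : realType) (H : lmodType R[i]).
Variable ip : H -> H -> R[i].

Definition inner_product : Prop :=
  [/\ (forall (a : R[i]) (x z y : H), ip (a *: x + z) y = a * ip x y + ip z y),
      (forall x y, ip y x = (ip x y)^*),
      (forall x, 0 <= ip x x) &
      (forall x, ip x x = 0 -> x = 0)].

Definition hnorm (x : H) : R[i] := sqrtC (ip x x).

Definition hcvg (u : nat -> H) (l : H) : Prop :=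
  forall e : R[i], 0 < e -> exists N, forall n, (N <= n)%N -> hnorm (u n - l) < e.

Definition hcauchy (u : nat -> H) : Prop :=
  forall e : R[i], 0 < e -> exists N, forall m n,
    (N <= m)%N -> (N <= n)%N -> hnorm (u m - u n) < e.

Definition hilbert_space : Prop :=
  inner_product /\ forall u, hcauchy u -> exists l, hcvg u l.

Definition bounded_op (T : H -> H) : Prop :=
  linear T /\ exists M : R[i], forall x, hnorm (T x) <= M * hnorm x.

Definition is_adjoint (T Ts : H -> H) : Prop :=
  forall x y, ip (T x) y = ip x (Ts y).

Definition closed_range (T : H -> H) : Prop :=
  forall (u : nat -> H) (l : H), (forall n, exists x, u n = T x) ->
    hcvg u l -> exists x, T x = l.

Definition is_MP_inverse (T Td : H -> H) : Prop :=
  [/\ bounded_op Td,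
      (forall x, T (Td (T x)) = T x),
      (forall x, Td (T (Td x)) = Td x),
      (forall x y, ip (Td (T x)) y = ip x (Td (T y))) &
      (forall x y, ip (T (Td x)) y = ip x (T (Td y)))].

Definition op_nonneg (A : H -> H) : Prop := forall x, 0 <= ip (A x) x.

Definition hypo_EP (T Td : H -> H) : Prop :=
  closed_range T /\ op_nonneg (fun x => Td (T x) - T (Td x)).
End Hilbert.

From HB Require Import structures.
From mathcomp Require Import all_boot all_order all_algebra.
From mathcomp Require Import complex.
From mathcomp Require Import reals.
Set Implicit Arguments. Unset Strict Implicit. Unset Printing Implicit Defensive.
Import Order.TTheory GRing.Theory Num.Theory.
Local Open Scope ring_scope.
Local Open Scope complex_scope.

(* P := T^+ T and Q := T T^+ are orthogonal projections, and T P = T forces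
   P T^* = T^*. Writing u := T x - P T x, the commutation hypothesis then reads
   u = T^* x - T^* P x, while T u = 0; hence <u, u> = <T u, x - P x> = 0, so
   P T = T, i.e. R(T) is contained in R(P) = R(T^* ). Then P Q = Q, and for
   orthogonal projections with P Q = Q we get <(P - Q) x, x> = ||(P - Q) x||^2. *)

Section LinearFun.
Variables (K : pzRingType) (U V W : lmodType K).

Lemma linear_funD (f : U -> V) : linear f -> forall x y, f (x + y) = f x + f y.
Proof. by move=> lf x y; have := lf 1 x y; rewrite !scale1r. Qed.

Lemma linear_funB (f : U -> V) : linear f -> forall x y, f (x - y) = f x - f y.
Proof. by move=> lf x y; rewrite addrC -scaleN1r lf scaleN1r addrC. Qed.

Lemma linear_comp (f : U -> V) (g : V -> W) : linear f -> linear g -> linear (g \o f).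
Proof. by move=> lf lg a x y /=; rewrite lf lg. Qed.

End LinearFun.

Section InnerProduct.
Variables (R : realType) (H : lmodType R[i]) (ip : H -> H -> R[i]).
Hypothesis ipH : inner_product ip.

Lemma ip_sym x y : ip y x = (ip x y)^*.
Proof. by case: ipH. Qed.

Lemma ip_ge0 x : 0 <= ip x x.
Proof. by case: ipH. Qed.

Lemma ip_eq0 x : ip x x = 0 -> x = 0.
Proof. by case: ipH => _ _ _; apply. Qed.

Lemma ipBl x z y : ip (x - z) y = ip x y - ip z y.
Proof. by case: ipH => ipl _ _ _; rewrite addrC -scaleN1r ipl mulN1r addrC. Qed.

Lemma ipBr y x z : ip y (x - z) = ip y x - ip y z.
Proof. by rewrite [LHS]ip_sym ipBl rmorphB (ip_sym x) (ip_sym z). Qed.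

Lemma ip0l y : ip 0 y = 0.
Proof. by rewrite -(subrr y) ipBl subrr. Qed.

Definition selfadjoint (A : H -> H) := forall x y, ip (A x) y = ip x (A y).

Definition orthoprojection (P : H -> H) := idempotent_fun P /\ selfadjoint P.

Lemma orthoprojection_ip (P : H -> H) :
  orthoprojection P -> forall x, ip (P x) x = ip (P x) (P x).
Proof. by case=> Pid Psa x; rewrite -Psa [P (P x)]Pid. Qed.

Lemma op_nonneg_orthoprojectionB (P Q : H -> H) :
  orthoprojection P -> orthoprojection Q -> (forall x, P (Q x) = Q x) ->
  op_nonneg ip (fun x => P x - Q x).
Proof.
move=> oP oQ PQ x.
have eQP : ip (Q x) (P x) = ip (Q x) (Q x).
  by rewrite -oP.2 PQ (orthoprojection_ip oQ).
have ePQ : ip (P x) (Q x) = ip (Q x) (Q x).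
  by rewrite ip_sym eQP -ip_sym.
have -> : ip (P x - Q x) x = ip (P x - Q x) (P x - Q x).
  rewrite !ipBl !ipBr (orthoprojection_ip oP) (orthoprojection_ip oQ) eQP ePQ.
  by rewrite opprB addrA subrK.
exact: ip_ge0.
Qed.

Section Adjoint.
Variables (T Ts : H -> H).
Hypotheses (lT : linear T) (Tadj : is_adjoint ip T Ts).

Lemma selfadjoint_fix_adjoint (P : H -> H) :
  selfadjoint P -> (forall x, T (P x) = T x) -> forall y, P (Ts y) = Ts y.
Proof.
move=> Psa TP y; apply/eqP; rewrite eq_sym -subr_eq0; apply/eqP/ip_eq0.
by rewrite [in ip _ (_ - _)]ipBr -Psa -!Tadj TP subrr.
Qed.

Lemma fix_range_of_commute_sum (P : H -> H) :
  linear P -> (forall x, T (P x) = T x) -> (forall y, P (Ts y) = Ts y) ->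
  (forall x, P (T x + Ts x) = T (P x) + Ts (P x)) ->
  forall x, P (T x) = T x.
Proof.
move=> lP TP PTs comm x.
pose u := T x - P (T x).
have Tu : T u = 0 by rewrite linear_funB // TP subrr.
have u_adj : u = Ts x - Ts (P x).
  move: (comm x); rewrite linear_funD // PTs TP => e.
  by rewrite /u -[Ts x](addKr (P (T x))) e addrA addrK addrC.
apply/eqP; rewrite eq_sym -subr_eq0; apply/eqP/ip_eq0.
by rewrite -/u {2}u_adj ipBr -!Tadj Tu !ip0l subrr.
Qed.

End Adjoint.

End InnerProduct.

Theorem mainTheorem3 (R : realType) (H : lmodType R[i]) (ip : H -> H -> R[i])
  (T Ts Td : H -> H) :
  hilbert_space ip ->
  bounded_op ip T ->
  is_adjoint ip T Ts ->
  closed_range ip T ->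
  is_MP_inverse ip T Td ->
  (forall x, Td (T (T x + Ts x)) = (T (Td (T x)) + Ts (Td (T x)))) ->
  hypo_EP ip T Td.
Proof.
move=> [ipH _] [lT _] Tadj Tcr [[lTd _] TPT PTdT Psa Qsa] comm.
pose P x := Td (T x); pose Q x := T (Td x).
have oP : orthoprojection ip P by split; [move=> x; exact: PTdT | exact: Psa].
have oQ : orthoprojection ip Q by split; [move=> x; exact: TPT | exact: Qsa].
have PTs := selfadjoint_fix_adjoint ipH Tadj Psa TPT.
have lP : linear P by exact: linear_comp lT lTd.
have PT := fix_range_of_commute_sum ipH lT Tadj lP TPT PTs comm.
have PQ x : P (Q x) = Q x by exact: PT.
split=> // x.
by have := op_nonneg_orthoprojectionB ipH oP oQ PQ x; rewrite /P /Q.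
Qed.
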